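(* For the direct referral reward scheme on the chain defined in the context, for every $i\le h-1$, $$r(i,1)\le nhP_h+1\quad\text{and}\quad r(i,0)\le nh^2P_h+h.$$
   Context: Chain with agents at positions $1,2,\dots$, each independently holding an answer with probability $p=1/n$; $h\ge1$. $r(i,s)$ is the reward to the agent at position $i$ when the first answer is at position $i+s\le h$. Let $P_i=\sum_{j=1}^i p(1-p)^{j-1}$ and $R_i=\sum_{s=1}^{h-i} r(i,s)p(1-p)^{s-1}$ (so $R_h=0$). The scheme is defined backwards by: $r(i,1)=nR_{i+1}+P_{h-i-1}$ for $i\le h-1$; $r(i,0)=\sum_{t=i}^{h-1}r(t,1)+1$ for $1\le i\le h$; $r(i,s)=1$ if $i+s\le h$ and $s>1$; $r(i,s)=0$ otherwise. *)

From mathcomp Require Import all_boot all_order all_algebra.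
Set Implicit Arguments. Unset Strict Implicit. Unset Printing Implicit Defensive.
Import Order.TTheory GRing.Theory Num.Theory.
Local Open Scope ring_scope.

Section Chain.
Variable R : realFieldType.
Variables (n h : nat).

Definition pr : R := 1 / n%:R.

Definition Pc (j : nat) : R := \sum_(1 <= k < j.+1) pr * (1 - pr) ^+ (k.-1).

(* r1d d = r(h-d, 1), computed backwards: for d = d'.+1 (i = h - d),
   r(i,1) = n R_{i+1} + P_{h-i-1} with
   R_{i+1} = sum_{s=1}^{h-i-1} r(i+1,s) p (1-p)^(s-1),
   where r(i+1,1) = r1d d' and r(i+1,s) = 1 for s > 1 (and i+1+s <= h). *)
Fixpoint r1d (d : nat) : R :=
  match d with
  | 0 => 0
  | d'.+1 =>
      n%:R * (\sum_(1 <= s < d'.+1)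
                 (if s == 1%N then r1d d' else 1) * (pr * (1 - pr) ^+ (s.-1)))
      + Pc d'
  end.

Definition r (i s : nat) : R :=
  if (i + s <= h)%N then
    match s with
    | 0 => (\sum_(i <= t < h) r1d (h - t)) + 1
    | 1 => r1d (h - i)
    | _ => 1
    end
  else 0.

Definition Rc (i : nat) : R :=
  \sum_(1 <= s < (h - i).+1) r i s * (pr * (1 - pr) ^+ (s.-1)).

End Chain.

From mathcomp Require Import all_boot all_order all_algebra.
From mathcomp Require Import ring lra zify.
Import Order.TTheory GRing.Theory Num.Theory.
Local Open Scope ring_scope.

(* Since [n p = 1], the recursion for [r(i,1)] telescopes:
   [r(i-1,1) = r(i,1) + n P_{h-i} - (1 - P_{h-i}) <= r(i,1) + n P_h].
   Hence [r(i,1) <= h n P_h], and [r(i,0)], a sum of at most [h] such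
   terms plus one, is at most [h^2 n P_h + 1]. *)

Section RewardBounds.
Variable R : realFieldType.
Variable n : nat.
Hypothesis n_gt0 : (0 < n)%N.

Local Notation p := (pr R n).
Local Notation P := (Pc R n).
Local Notation r1 := (r1d R n).

Lemma mulr_n_pr : n%:R * p = 1.
Proof. by rewrite /pr mul1r divff // pnatr_eq0 -lt0n. Qed.

Lemma pr_ge0 : 0 <= p.
Proof. by rewrite /pr mul1r invr_ge0 ler0n. Qed.

Lemma subr_pr_ge0 : 0 <= 1 - p.
Proof. by rewrite subr_ge0 /pr mul1r invf_le1 ?ltr0n // ler1n. Qed.

Lemma Pc_closed d : P d = 1 - (1 - p) ^+ d.
Proof.
elim: d => [|d IH]; first by rewrite /Pc big_geq // expr0 subrr.
by rewrite /Pc big_nat_recr //= -/(Pc R n d) IH exprS; ring.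
Qed.

Lemma Pc_ge0 d : 0 <= P d.
Proof.
rewrite Pc_closed subr_ge0 exprn_ile1 ?subr_pr_ge0 //.
by rewrite lerBlDr lerDl pr_ge0.
Qed.

Lemma Pc_le1 d : P d <= 1.
Proof. by rewrite Pc_closed lerBlDr lerDl exprn_ge0 // subr_pr_ge0. Qed.

Lemma Pc_homo : {homo P : d e / (d <= e)%N >-> d <= e}.
Proof.
move=> d e le_de; rewrite !Pc_closed lerB // ler_wiXn2l ?subr_pr_ge0 //.
by rewrite lerBlDr lerDl pr_ge0.
Qed.

Lemma r1dSS d : r1 d.+2 = r1 d.+1 + n%:R * P d.+1 - (1 - P d.+1).
Proof.
set tail := \sum_(2 <= s < d.+2) p * (1 - p) ^+ s.-1.
have P_split : P d.+1 = p + tail by rewrite /Pc big_ltn //= expr0 mulr1.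
have sum_split : \sum_(1 <= s < d.+2)
    (if s == 1%N then r1 d.+1 else 1) * (p * (1 - p) ^+ s.-1)
    = r1 d.+1 * p + tail.
  rewrite big_ltn //= expr0 mulr1; congr (_ + _).
  by apply: eq_big_nat => -[|[|s]] //= _; rewrite mul1r.
rewrite [LHS]/= sum_split P_split mulrDr mulrCA mulr_n_pr mulrDr mulr_n_pr.
ring.
Qed.

Lemma r1dS_le d : r1 d.+1 <= r1 d + n%:R * P d.
Proof.
case: d => [|d].
  by rewrite /= big_geq // mulr0 add0r /Pc big_geq // mulr0 !addr0.
by rewrite r1dSS lerBlDr lerDl subr_ge0 Pc_le1.
Qed.

Lemma r1d_le d : r1 d <= d%:R * (n%:R * P d).
Proof.
elim: d => [|d IH]; first by rewrite /= mul0r.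
apply: le_trans (r1dS_le d) _.
have nP_homo : n%:R * P d <= n%:R * P d.+1 by rewrite ler_pM2l ?ltr0n ?Pc_homo.
rewrite -natr1 mulrDl mul1r lerD //.
by apply: le_trans IH _; rewrite ler_wpM2l.
Qed.

Lemma r1d_le_horizon h d : (d <= h)%N -> r1 d <= h%:R * (n%:R * P h).
Proof.
move=> le_dh; apply: le_trans (r1d_le d) _.
have nP_ge0 : 0 <= n%:R * P d by rewrite mulr_ge0 // Pc_ge0.
by apply: ler_pM; rewrite ?ler_nat // ler_pM2l ?ltr0n ?Pc_homo.
Qed.

End RewardBounds.

Theorem proposition4p2 (R : realFieldType) (n h : nat) (hn : (0 < n)%N) (hh : (1 <= h)%N)
  (i : nat) (hi1 : (1 <= i)%N) (hih : (i <= h - 1)%N) :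
  r R n h i 1 <= n%:R * h%:R * Pc R n h + 1 /\
  r R n h i 0 <= n%:R * h%:R ^+ 2 * Pc R n h + h%:R.
Proof.
set M := h%:R * (n%:R * Pc R n h).
have M_ge0 : 0 <= M by rewrite !mulr_ge0 // Pc_ge0.
have r1_le t : r1d R n (h - t) <= M by apply: r1d_le_horizon; rewrite // leq_subr.
have -> : n%:R * h%:R * Pc R n h = M by rewrite /M; ring.
have -> : n%:R * h%:R ^+ 2 * Pc R n h = h%:R * M by rewrite /M; ring.
rewrite /r !ifT; [|lia|lia]; split; first by apply: le_trans (r1_le i) _; rewrite lerDl ler01.
have sum_le : \sum_(i <= t < h) r1d R n (h - t) <= (h - i)%:R * M.
  by rewrite mulr_natl -sumr_const_nat; apply: ler_sum_nat => t _.
have hi_le : (h - i)%:R * M <= h%:R * M by rewrite ler_wpM2r // ler_nat leq_subr.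
have h_ge1 : 1 <= h%:R :> R by rewrite ler1n.
lra.
Qed.
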